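(* Let $\mathcal{A}$ be a GFG-NRW whose language is recognized by some GFG-NBW, and let $g$ be a finite-state strategy witnessing its GFGness. Then: (1) a $g$-memory $m$ of a state $q$ of $\mathcal{A}$ cannot belong both to a $q$-exclusive accepting cycle of $\mathcal{A}_g$ and to a rejecting cycle of $\mathcal{A}_g$; (2) if $m$ and $m'$ are $g$-memories of a state $q$ such that $m$ belongs to a $q$-exclusive accepting cycle and $m'$ belongs to a rejecting cycle, and $P_{m\to m'}$, $P_{m'\to m}$ denote the sets of paths of $\mathcal{A}_g$ from $m$ to $m'$ and from $m'$ to $m$ respectively, then for $P=P_{m\to m'}$ or for $P=P_{m'\to m}$ we have that $P$ is empty or every combination of paths from $P$ is accepting.
   Context: An automaton $\langle\Sigma,Q,Q_0,\delta,\alpha\rangle$ has $\delta:Q\times\Sigma\to2^Q$; runs are accepting if the set of infinitely visited states satisfies $\alpha$. Rabin ($\alpha$ a set of pairs $\langle E,F\rangle$, $E$ bad, $F$ good): a set $S$ is accepting iff some pair has $S\cap E=\emptyset$ and $S\cap F\neq\emptyset$; Büchi ($\alpha\subseteq Q$): accepting iff $S\cap\alpha\ne\emptyset$. NRW/NBW: nondeterministic Rabin/Büchi word automaton. $\mathcal{A}$ is GFG if there is a strategy $g:\Sigma^*\to Q$ such that for every $w=a_1a_2\cdots$, $g(\epsilon),g(a_1),g(a_1a_2),\ldots$ is a run on $w$, accepting whenever $w\in L(\mathcal{A})$. Finite-state strategies are transducers $g=\langle\Sigma,Q,M,m_0,\rho,\tau\rangle$ (finite memories $M$, $\rho:M\times\Sigma\to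 M$ extended to words from $m_0$, $\tau:M\to Q$, $g(u)=\tau(\rho(u))$); $m$ is a ($g$-)memory of $q$ if $\tau(m)=q$. $\mathcal{A}_g=\langle\Sigma,M,m_0,\rho,\alpha_g\rangle$ where $\alpha_g$ replaces each set $F$ in $\alpha$ by $\{m\mid\tau(m)\in F\}$. Paths are finite sequences of states (memories) joined by transitions; cycles start and end at the same element; a path or cycle is accepting/rejecting according to whether its set of elements is accepting. For a set $P$ of paths, a combination of paths from $P$ is the union of the element sets of a nonempty subset of $P$. A path of $\mathcal{A}_g$ is $q$-exclusive accepting if its set of memories is accepting but that set minus the memories of $q$ is not accepting. *)

From mathcomp Require Import all_boot.
Set Implicit Arguments. Unset Strict Implicit. Unset Printing Implicit Defensive.

Section Automata.
Variables (Sigma Q : finType).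

(* A nondeterministic word automaton <Sigma, Q, Q0, delta, alpha>;
   the acceptance condition is given as a predicate on the set of
   infinitely visited states (represented as a Prop-valued predicate). *)

Definition is_run (Q0 : {set Q}) (delta : Q -> Sigma -> {set Q})
  (w : nat -> Sigma) (r : nat -> Q) : Prop :=
  r 0 \in Q0 /\ forall i, r i.+1 \in delta (r i) (w i).

Definition inf_often (r : nat -> Q) (q : Q) : Prop :=
  forall n, exists k, n <= k /\ r k = q.

Definition rabin_acc (alpha : seq ({set Q} * {set Q})) (S : Q -> Prop) : Prop :=
  exists2 EF, EF \in alpha &
    (forall q, q \in EF.1 -> ~ S q) /\ (exists q, q \in EF.2 /\ S q).

Definition buchi_acc (alpha : {set Q}) (S : Q -> Prop) : Prop :=
  exists q, q \in alpha /\ S q.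

Definition lang (Q0 : {set Q}) (delta : Q -> Sigma -> {set Q})
  (acc : (Q -> Prop) -> Prop) (w : nat -> Sigma) : Prop :=
  exists r, is_run Q0 delta w r /\ acc (inf_often r).

(* the prefix a_1 ... a_n of w = a_1 a_2 ... (with a_(i+1) = w i) *)
Definition prefix (w : nat -> Sigma) (n : nat) : seq Sigma := mkseq w n.

Definition GFG_strategy (Q0 : {set Q}) (delta : Q -> Sigma -> {set Q})
  (acc : (Q -> Prop) -> Prop) (g : seq Sigma -> Q) : Prop :=
  forall w, is_run Q0 delta w (fun n => g (prefix w n)) /\
    (lang Q0 delta acc w -> acc (inf_often (fun n => g (prefix w n)))).

Definition GFG (Q0 : {set Q}) (delta : Q -> Sigma -> {set Q})
  (acc : (Q -> Prop) -> Prop) : Prop :=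
  exists g, GFG_strategy Q0 delta acc g.

End Automata.

Section Transducer.
Variables (Sigma Q M : finType).
Variables (m0 : M) (rho : M -> Sigma -> M) (tau : M -> Q).

Definition strat_of (u : seq Sigma) : Q := tau (foldl rho m0 u).

Definition reachable (m : M) : Prop := exists u : seq Sigma, foldl rho m0 u = m.

(* A_g = <Sigma, M, m0, rho, alpha_g> *)
Definition alpha_g (alpha : seq ({set Q} * {set Q})) : seq ({set M} * {set M}) :=
  map (fun EF : {set Q} * {set Q} =>
         ([set m | tau m \in EF.1] : {set M}, [set m | tau m \in EF.2] : {set M})) alpha.

Definition edge_g : rel M := fun m m' => [exists a, rho m a == m'].

Definition acc_g (alpha : seq ({set Q} * {set Q})) (X : {set M}) : Prop :=
  rabin_acc (alpha_g alpha) (fun m => m \in X).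

(* A path of A_g from m to m' is  m :: s  with  path edge_g m s  and
   last m s = m'; its set of elements is [set x in m :: s].
   A cycle through m is such a path from x to x with at least one
   transition (s != [::]) containing m. *)
Definition path_from_to (m m' : M) (s : seq M) : bool :=
  path edge_g m s && (last m s == m').

Definition cycle_through (m : M) (x : M) (s : seq M) : bool :=
  (s != [::]) && path_from_to x x s && (m \in x :: s).

Definition excl_acc (alpha : seq ({set Q} * {set Q})) (q : Q) (X : {set M}) : Prop :=
  acc_g alpha X /\ ~ acc_g alpha (X :\: [set m | tau m == q]).

Definition on_excl_acc_cycle (alpha : seq ({set Q} * {set Q})) (q : Q) (m : M) : Prop :=
  exists x s, cycle_through m x s /\ excl_acc alpha q [set y in x :: s].

Definition on_rej_cycle (alpha : seq ({set Q} * {set Q})) (m : M) : Prop :=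
  exists x s, cycle_through m x s /\ ~ acc_g alpha [set y in x :: s].

(* P_{m -> m'} is empty, or every combination of paths from it (the union
   of the element sets of a nonempty collection of such paths) is accepting.
   Since M is finite, unions over arbitrary nonempty subsets coincide with
   unions over nonempty finite lists. *)
Definition empty_or_all_comb_acc (alpha : seq ({set Q} * {set Q})) (m m' : M) : Prop :=
  (~ exists s, path_from_to m m' s) \/
  (forall ps : seq (seq M), ps != [::] ->
     (forall s, s \in ps -> path_from_to m m' s) ->
     acc_g alpha [set y | has (fun s => y \in m :: s) ps]).
End Transducer.

From Pilot Require Import Defs.
From mathcomp Require Import all_boot zify.
From Stdlib Require Import Classical.
Set Implicit Arguments. Unset Strict Implicit. Unset Printing Implicit Defensive.

(* Everything rests on a pumping property of A_g at a reachable memory m: if v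
   and u are loops at m and the memories visited along v form an accepting set,
   then so do those visited along v and u together.  Let x lead to m and read
   x (v^n0 u) (v^n1 u) ..., where each n_k is chosen so that the strategy of the
   GFG-NBW visits an accepting state while reading v^n_k; such an n_k exists
   because the current prefix followed by v^omega is in L(A).  The NBW then
   accepts the word, so the run of A_g along g accepts it as well, and its
   infinity set is exactly the memories of v and u.
   Both claims follow, since the Rabin acceptance of X U Y forces that of X or
   of Y, and a good q-memory of the exclusive cycle would, through the q-memory
   of the rejecting cycle, make that cycle accepting.  For (2), a rejecting
   combination of paths m -> m' and any combination of paths m' -> m are glued
   with the rejecting cycle into one loop at m. *)

Lemma rabin_accU (Q : finType) (alpha : seq ({set Q} * {set Q})) (X Y : {set Q}) :
  rabin_acc alpha (fun q => q \in X :|: Y) ->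
  rabin_acc alpha (fun q => q \in X) \/ rabin_acc alpha (fun q => q \in Y).
Proof.
move=> [EF EFin [noE [q [qF]]]]; rewrite inE => /orP [qX|qY]; [left|right];
  (exists EF => //; split; last by exists q);
  by move=> p /noE pXY pZ; apply: pXY; rewrite inE pZ ?orbT.
Qed.

Lemma rabin_acc0 (Q : finType) (alpha : seq ({set Q} * {set Q})) :
  ~ rabin_acc alpha (fun q => q \in set0).
Proof. by case=> EF _ [_ [q []]]; rewrite inE. Qed.

Lemma buchi_acc_of_frequent (T : finType) (B : {set T}) (r : nat -> T) :
  (forall N, exists2 n, N <= n & r n \in B) -> buchi_acc B (inf_often r).
Proof.
move=> frequent; apply: NNPP => not_acc.
have /fin_all_exists [N late] : forall q, exists Nq, forall n, q \in B -> Nq <= n -> r n != q.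
  move=> q; apply: NNPP => no_bound; apply: not_acc.
  exists q; split=> [|n]; first by apply: NNPP => qB; apply: no_bound; exists 0.
  apply: NNPP => no_visit; apply: no_bound; exists n => k _ le_nk; apply/eqP => rkp.
  by apply: no_visit; exists k.
have [n le_n rnB] := frequent (\max_(q in B) N q).
by have /eqP := late _ n rnB (leq_trans (leq_bigmax_cond _ rnB) le_n).
Qed.

Section Words.
Variables (Sigma M : finType) (rho : M -> Sigma -> M).

Definition visited (x : M) (v : seq Sigma) : {set M} := [set y in x :: scanl rho x v].

Lemma last_scanl x v : last x (scanl rho x v) = foldl rho x v.
Proof. by elim: v x => //= a v IH x; rewrite IH. Qed.

Lemma mem_visited x v : x \in visited x v.
Proof. by rewrite inE mem_head. Qed.

Lemma visitedP x v y :
  reflect (exists2 j, j <= size v & y = foldl rho x (take j v)) (y \in visited x v).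
Proof.
rewrite inE; apply: (iffP (nthP x)) => [[j lt_j <-]|[j le_j ->]].
  by rewrite /= size_scanl ltnS in lt_j; exists j; rewrite ?nth_cons_scanl.
by exists j; rewrite ?nth_cons_scanl //= size_scanl ltnS.
Qed.

Lemma visited_cat x v1 v2 :
  visited x (v1 ++ v2) = visited x v1 :|: visited (foldl rho x v1) v2.
Proof.
apply/setP => y; rewrite in_setU !in_set scanl_cat -cat_cons mem_cat.
rewrite [y \in _ :: scanl _ (foldl _ _ _) _]in_cons orbCA.
by case: eqVneq => [->|]; rewrite //= -{1}last_scanl mem_last.
Qed.

Lemma visited_rot x v y : foldl rho x v = x -> y \in visited x v ->
  exists v', [/\ size v' = size v, foldl rho y v' = y & visited y v' = visited x v].
Proof.
move=> loop /visitedP [j _ ->]; exists (rot j v).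
have back : foldl rho (foldl rho x (take j v)) (drop j v) = x.
  by rewrite -foldl_cat cat_take_drop.
split; first exact: size_rot.
  by rewrite /rot foldl_cat back.
by rewrite -[in RHS](cat_take_drop j v) /rot !visited_cat back setUC.
Qed.

Lemma path_scanl x s : path (edge_g rho) x s -> exists v, s = scanl rho x v.
Proof.
elim: s x => [|y s IH] x /=; first by exists [::].
by case/andP => /existsP [a /eqP <-] /IH [v ->]; exists (a :: v).
Qed.

Lemma path_from_to_word a b s : path_from_to rho a b s ->
  exists2 v, foldl rho a v = b & [set y in a :: s] = visited a v.
Proof.
by case/andP => /path_scanl [v ->] /eqP <-; exists v; rewrite ?last_scanl.
Qed.

Lemma cycle_through_loop m x s : cycle_through rho m x s ->
  exists v, [/\ v != [::], foldl rho m v = m & [set y in x :: s] = visited m v].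
Proof.
case/andP => /andP [s_neq0 /andP [/path_scanl [v s_def] /eqP]] + ms; subst s.
rewrite last_scanl => loop; move: s_neq0; rewrite -size_eq0 size_scanl size_eq0 => v_neq0.
have [|v' [size_v' loop' visE]] := visited_rot loop (y := m); first by rewrite inE.
by exists v'; rewrite visE -size_eq0 size_v' size_eq0.
Qed.

Definition word_pow (v : seq Sigma) n := flatten (nseq n v).

Lemma word_powS v n : word_pow v n.+1 = word_pow v n ++ v.
Proof. by rewrite /word_pow -flatten_rcons; congr flatten; elim: n => //= n ->. Qed.

Lemma foldl_word_pow x v n : foldl rho x v = x -> foldl rho x (word_pow v n) = x.
Proof. by move=> loop; elim: n => // n IH; rewrite word_powS foldl_cat IH loop. Qed.

Lemma visited_word_pow x v n : foldl rho x v = x -> visited x (word_pow v n.+1) = visited x v.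
Proof.
move=> loop; elim: n => [|n IH]; first by rewrite /word_pow /= cats0.
by rewrite word_powS visited_cat IH foldl_word_pow // setUid.
Qed.

Definition comb (a : M) (ps : seq (seq M)) : {set M} := [set y | has (fun s => y \in a :: s) ps].

Lemma comb_cons a s ps : comb a (s :: ps) = [set y in a :: s] :|: comb a ps.
Proof. by apply/setP => y; rewrite !inE. Qed.

Lemma sub_comb a s ps : s \in ps -> [set y in a :: s] \subset comb a ps.
Proof. by move=> sps; apply/subsetP => y; rewrite !in_set => ys; apply/hasP; exists s. Qed.

Lemma comb_loop a b z ps : foldl rho b z = a -> ps != [::] ->
    (forall s, s \in ps -> path_from_to rho a b s) ->
  exists2 u, foldl rho a u = a & visited a u = comb a ps :|: visited b z.
Proof.
move=> back; elim: ps => [//|s ps IH] _ paths.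
have [p ab visE] := path_from_to_word (paths s (mem_head _ _)).
have loop : foldl rho a (p ++ z) = a by rewrite foldl_cat ab.
case: (eqVneq ps [::]) => [->|ps_neq0].
  exists (p ++ z); rewrite // visited_cat ab -visE; congr (_ :|: _).
  by apply/setP => y; rewrite !inE /= orbF.
have [|u loop_u vis_u] := IH ps_neq0; first by move=> s' s'ps; apply/paths/mem_behead.
exists (p ++ z ++ u); first by rewrite catA foldl_cat loop.
by rewrite catA visited_cat loop vis_u visited_cat ab comb_cons visE setUACA setUid.
Qed.

Lemma comb_cycle m m' c ps ps' : foldl rho m' c = m' -> ps != [::] -> ps' != [::] ->
    (forall s, s \in ps -> path_from_to rho m m' s) ->
    (forall s, s \in ps' -> path_from_to rho m' m s) ->
  exists2 u, foldl rho m u = m & visited m u = comb m ps :|: visited m' c :|: comb m' ps'.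
Proof.
case: ps => [//|s0 ps]; case: ps' => [//|r0 ps'] loop_c _ _ paths paths'.
have [p0 mm' vis_p0] := path_from_to_word (paths s0 (mem_head _ _)).
have [r m'm vis_r] := path_from_to_word (paths' r0 (mem_head _ _)).
have [t loop_t vis_t] := comb_loop (ps := r0 :: ps') mm' isT paths'.
have back : foldl rho m' (c ++ t ++ r) = m by rewrite !foldl_cat loop_c loop_t.
have [u loop_u vis_u] := comb_loop (ps := s0 :: ps) back isT paths.
exists u => //; rewrite vis_u !visited_cat loop_c loop_t vis_t.
have /subsetP p0_sub := sub_comb m (mem_head s0 ps); rewrite vis_p0 in p0_sub.
have /subsetP r_sub := sub_comb m' (mem_head r0 ps'); rewrite vis_r in r_sub.
apply/setP => y; rewrite !in_setU; move/implyP: (p0_sub y); move/implyP: (r_sub y).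
by case: (y \in visited m p0) (y \in visited m' r) (y \in comb m _) (y \in comb m' _)
  (y \in visited m' c) => [] [] [] [] [].
Qed.

End Words.

Section Transducer.
Variables (Sigma Q M : finType) (rho : M -> Sigma -> M) (tau : M -> Q).
Variable alpha : seq ({set Q} * {set Q}).

Lemma rabin_acc_imset (P : Q -> Prop) (S : {set M}) :
  (forall q, P q <-> q \in tau @: S) -> rabin_acc alpha P <-> acc_g tau alpha S.
Proof.
move=> PE; split.
  move=> [EF EFin [noE [q [qF /PE /imsetP [y yS qE]]]]].
  exists ([set m | tau m \in EF.1], [set m | tau m \in EF.2]); first exact: map_f.
  split; last by exists y; rewrite inE -qE.
  by move=> z; rewrite inE => /noE zE zS; apply/zE/PE/imset_f.
move=> [_ /mapP [EF EFin ->] [noE [y [yF yS]]]]; exists EF => //; split.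
  by move=> q qE /PE /imsetP [z zS qz]; apply: (noE z); rewrite ?inE -?qz.
by exists (tau y); split; [rewrite inE in yF | apply/PE/imset_f].
Qed.

Lemma acc_g_fiber (X Y : {set M}) y : y \in Y -> (forall x, x \in X -> tau x = tau y) ->
  acc_g tau alpha (X :|: Y) -> acc_g tau alpha Y.
Proof.
move=> yY Xy [EF EFin [noE [z [zF /setUP zXY]]]]; exists EF => //; split.
  by move=> p /noE pn pY; apply: pn; rewrite inE pY orbT.
case: zXY => [zX|zY]; last by exists z.
exists y; split=> //; move: EFin zF => /mapP [EF' _ ->] /=.
by rewrite !inE (Xy z zX).
Qed.

Lemma acc_excl_rej q (C1 C2 X : {set M}) m :
  excl_acc tau alpha q C1 -> ~ acc_g tau alpha C2 -> m \in C2 -> tau m = q ->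
  acc_g tau alpha (C1 :|: C2 :|: X) -> acc_g tau alpha X.
Proof.
move=> [_ C1rej] C2rej mC2 mq.
set Cq := [set y | tau y == q].
rewrite -(setID C1 Cq) [_ :|: C1 :\: Cq]setUC -(setUA (C1 :\: Cq)).
case/rabin_accU => [|//]; case/rabin_accU => [//|/(acc_g_fiber mC2) C2acc].
by case: C2rej; apply: C2acc => x; rewrite !inE => /andP [_ /eqP ->].
Qed.

Lemma not_empty_or_all_comb_acc m m' : ~ empty_or_all_comb_acc rho tau alpha m m' ->
  exists ps, [/\ ps != [::], forall s, s \in ps -> path_from_to rho m m' s
                & ~ acc_g tau alpha (comb m ps)].
Proof.
move=> not_eoa; apply: NNPP => no_ps; apply: not_eoa; right => ps ps_neq0 paths.
by apply: NNPP => rej; apply: no_ps; exists ps.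
Qed.

End Transducer.

Section LimitWord.
Variables (Sigma : finType) (a0 : Sigma) (pre b : nat -> seq Sigma).
Hypothesis preS : forall k, pre k.+1 = pre k ++ b k.
Hypothesis b_neq0 : forall k, b k != [::].

(* The default [a0] is never read, since [pre i.+1] has more than [i] letters. *)
Definition limit_word (i : nat) : Sigma := nth a0 (pre i.+1) i.

Lemma size_pre k : k + size (pre 0) <= size (pre k).
Proof.
elim: k => // k IH; rewrite preS size_cat.
by rewrite addSn -addn1 leq_add // lt0n size_eq0.
Qed.

Lemma pre_catr k l : k <= l -> exists t, pre l = pre k ++ t.
Proof.
elim: l => [|l IH]; first by rewrite leqn0 => /eqP ->; exists [::]; rewrite cats0.
rewrite leq_eqVlt => /orP [/eqP ->|/IH [t tE]]; first by exists [::]; rewrite cats0.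
by exists (t ++ b l); rewrite preS tE catA.
Qed.

Lemma nth_pre k i : i < size (pre k) -> nth a0 (pre k) i = limit_word i.
Proof.
move=> lt_ik; rewrite /limit_word; case: (leqP k i.+1) => [le_k|lt_k].
  have [t ->] := pre_catr le_k; by rewrite nth_cat lt_ik.
have [t ->] := pre_catr (ltnW lt_k); rewrite nth_cat.
by have := size_pre i.+1; case: ifP => //; lia.
Qed.

Lemma prefix_limit_word k j : j <= size (pre k) -> Defs.prefix limit_word j = take j (pre k).
Proof.
move=> le_jk; apply: (@eq_from_nth _ a0); first by rewrite size_mkseq size_takel.
by move=> i; rewrite size_mkseq => lt_ij; rewrite nth_mkseq // nth_take // nth_pre //; lia.
Qed.

Lemma pre_block n : size (pre 0) <= n ->
  exists k j, j <= size (b k) /\ n = size (pre k) + j.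
Proof.
move=> le_n.
suff upto k : n <= size (pre k) -> exists k j, j <= size (b k) /\ n = size (pre k) + j.
  by apply: (upto n); have := size_pre n; lia.
elim: k => [|k IH] le_nk.
  by exists 0, 0; split=> //; lia.
case: (leqP n (size (pre k))) => [/IH //|lt_kn].
by exists k, (n - size (pre k)); move: le_nk; rewrite preS size_cat; split; lia.
Qed.

End LimitWord.

Section LimitRun.
Variables (Sigma M : finType) (rho : M -> Sigma -> M) (m0 m : M).
Variables (a0 : Sigma) (pre b : nat -> seq Sigma) (S : {set M}).
Hypothesis preS : forall k, pre k.+1 = pre k ++ b k.
Hypothesis b_neq0 : forall k, b k != [::].
Hypothesis pre0 : foldl rho m0 (pre 0) = m.
Hypothesis b_loop : forall k, foldl rho m (b k) = m.
Hypothesis visited_b : forall k, visited rho m (b k) = S.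

Lemma foldl_pre k : foldl rho m0 (pre k) = m.
Proof. by elim: k => // k IH; rewrite preS foldl_cat IH b_loop. Qed.

Lemma limit_run_block k j : j <= size (b k) ->
  foldl rho m0 (Defs.prefix (limit_word a0 pre) (size (pre k) + j)) = foldl rho m (take j (b k)).
Proof.
move=> le_j; rewrite (prefix_limit_word a0 preS b_neq0 (k := k.+1)); last first.
  by rewrite preS size_cat leq_add2l.
by rewrite preS take_cat ltnNge leq_addr /= addKn foldl_cat foldl_pre.
Qed.

Lemma limit_run_in n : size (pre 0) <= n ->
  foldl rho m0 (Defs.prefix (limit_word a0 pre) n) \in S.
Proof.
case/(pre_block preS b_neq0) => k [j [le_j ->]].
by rewrite limit_run_block // -(visited_b k); apply/visitedP; exists j.
Qed.

Lemma limit_run_inf y : y \in S ->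
  inf_often (fun n => foldl rho m0 (Defs.prefix (limit_word a0 pre) n)) y.
Proof.
move=> yS N; move: yS; rewrite -(visited_b N) => /visitedP [j le_j ->].
exists (size (pre N) + j); rewrite limit_run_block //; split=> //.
by have := size_pre preS b_neq0 N; lia.
Qed.

End LimitRun.

Section GFGLimit.
Variables (Sigma Q M : finType) (Q0 : {set Q}) (delta : Q -> Sigma -> {set Q}).
Variables (alpha : seq ({set Q} * {set Q})) (m0 : M) (rho : M -> Sigma -> M) (tau : M -> Q).
Hypothesis gfg_g : GFG_strategy Q0 delta (rabin_acc alpha) (strat_of m0 rho tau).

Lemma limit_word_lang a0 (pre b : nat -> seq Sigma) m S :
    (forall k, pre k.+1 = pre k ++ b k) -> (forall k, b k != [::]) ->
    foldl rho m0 (pre 0) = m -> (forall k, foldl rho m (b k) = m) ->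
    (forall k, visited rho m (b k) = S) ->
  lang Q0 delta (rabin_acc alpha) (limit_word a0 pre) <-> acc_g tau alpha S.
Proof.
move=> preS b_neq0 pre0 b_loop visited_b; set w := limit_word a0 pre.
have accE : rabin_acc alpha (inf_often (fun n => strat_of m0 rho tau (Defs.prefix w n)))
    <-> acc_g tau alpha S.
  apply: rabin_acc_imset => q; split.
    move=> /(_ (size (pre 0))) [n [le_n <-]]; apply: imset_f.
    exact: (limit_run_in a0 preS b_neq0 pre0 b_loop visited_b).
  case/imsetP => y yS ->{q} N.
  have [n [le_n <-]] := limit_run_inf a0 preS b_neq0 pre0 b_loop visited_b yS N.
  by exists n.
split=> [/(gfg_g w).2 /accE //|/accE acc].
by exists (fun n => strat_of m0 rho tau (Defs.prefix w n)); split; first exact: (gfg_g w).1.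
Qed.

End GFGLimit.

Section Pumping.
Variables (Sigma Q M : finType) (Q0 : {set Q}) (delta : Q -> Sigma -> {set Q}).
Variables (alpha : seq ({set Q} * {set Q})) (m0 : M) (rho : M -> Sigma -> M) (tau : M -> Q).
Variables (Q' : finType) (Q0' : {set Q'}) (delta' : Q' -> Sigma -> {set Q'}) (beta : {set Q'}).
Variable g' : seq Sigma -> Q'.
Hypothesis gfg_g' : GFG_strategy Q0' delta' (buchi_acc beta) g'.
Hypothesis same_lang :
  forall w, lang Q0' delta' (buchi_acc beta) w <-> lang Q0 delta (rabin_acc alpha) w.
Hypothesis gfg_g : GFG_strategy Q0 delta (rabin_acc alpha) (strat_of m0 rho tau).
Variables (m : M) (v u : seq Sigma).
Hypothesis v_neq0 : v != [::].
Hypothesis v_loop : foldl rho m v = m.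
Hypothesis acc_v : acc_g tau alpha (visited rho m v).

Definition beta_hit (p : seq Sigma) n :=
  [exists j : 'I_(size (p ++ word_pow v n)).+1,
     (size p < j) && (g' (take j (p ++ word_pow v n)) \in beta)].

Lemma exists_beta_hit p : foldl rho m0 p = m -> exists n, beta_hit p n.
Proof.
move=> pm; have [a0 _] : exists a0, a0 \in v.
  by case: v v_neq0 => // a v' _; exists a; exact: mem_head.
pose pre k := p ++ word_pow v k.
have preS k : pre k.+1 = pre k ++ v by rewrite /pre word_powS catA.
have pre0 : foldl rho m0 (pre 0) = m by rewrite /pre cats0.
have /(gfg_g' _).2 [q [qbeta q_inf]] : lang Q0' delta' (buchi_acc beta) (limit_word a0 pre).
  apply/same_lang.
  exact/(limit_word_lang gfg_g a0 preS (fun=> v_neq0) pre0 (fun=> v_loop) (fun=> erefl)).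
have [k [lt_pk gk]] := q_inf (size p).+1.
have le_k : k <= size (pre k) by have := size_pre preS (fun=> v_neq0) k; lia.
exists k; apply/existsP; exists (Ordinal (le_k : k < (size (pre k)).+1)).
by rewrite /= lt_pk -(prefix_limit_word a0 preS (fun=> v_neq0) le_k) gk.
Qed.

Lemma acc_loop_setU : reachable m0 rho m -> foldl rho m u = m ->
  acc_g tau alpha (visited rho m v :|: visited rho m u).
Proof.
move=> [x xm] u_loop; have [a0 _] : exists a0, a0 \in v.
  by case: v v_neq0 => // a v' _; exists a; exact: mem_head.
(* The second disjunct only makes [pump] total; it never holds along [pre]. *)
have hit_total p : exists n, beta_hit p n || (foldl rho m0 p != m).
  case: (eqVneq (foldl rho m0 p) m) => [/exists_beta_hit [n hit]|_].
    by exists n; rewrite hit.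
  by exists 0; apply/orP; right.
pose pump p := ex_minn (hit_total p).
pose block p := word_pow v (pump p) ++ u.
pose pre := fix pre k := if k is k'.+1 then pre k' ++ block (pre k') else x.
have preS k : pre k.+1 = pre k ++ block (pre k) by [].
have pre_m k : foldl rho m0 (pre k) = m.
  by elim: k => // k IH; rewrite preS !foldl_cat IH foldl_word_pow.
have hit k : beta_hit (pre k) (pump (pre k)).
  by rewrite /pump; case: ex_minnP => n; rewrite pre_m eqxx orbF.
have pump_gt0 k : 0 < pump (pre k).
  move: (hit k); case: (pump (pre k)) => // /existsP [[j lt_j] /andP [/= lt_pj _]].
  by move: lt_j; rewrite /word_pow cats0 ltnS leqNgt lt_pj.
have block_neq0 k : block (pre k) != [::].
  rewrite /block -(prednK (pump_gt0 k)) word_powS -catA -size_eq0 !size_cat.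
  by rewrite -lt0n ltn_addl // ltn_addr // lt0n size_eq0.
have block_loop k : foldl rho m (block (pre k)) = m by rewrite foldl_cat foldl_word_pow.
have visited_block k : visited rho m (block (pre k)) = visited rho m v :|: visited rho m u.
  by rewrite visited_cat foldl_word_pow // -(prednK (pump_gt0 k)) visited_word_pow.
apply/(limit_word_lang gfg_g a0 preS block_neq0 (pre_m 0) block_loop visited_block).
apply/same_lang; exists (fun n => g' (Defs.prefix (limit_word a0 pre) n)).
split; first exact: (gfg_g' _).1.
apply: buchi_acc_of_frequent => N.
case/existsP: (hit N) => [[j lt_j] /andP [/= lt_Nj gj]].
have le_j : j <= size (pre N.+1) by rewrite preS /block catA size_cat; lia.
exists j; first by have := size_pre preS block_neq0 N; lia.
by rewrite (prefix_limit_word a0 preS block_neq0 le_j) preS /block catA takel_cat.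
Qed.

End Pumping.

Theorem lemma14 (Sigma Q : finType) (Q0 : {set Q}) (delta : Q -> Sigma -> {set Q})
  (alpha : seq ({set Q} * {set Q}))
  (M : finType) (m0 : M) (rho : M -> Sigma -> M) (tau : M -> Q) :
  (* L(A) is recognized by some GFG-NBW *)
  (exists (Q' : finType) (Q0' : {set Q'}) (delta' : Q' -> Sigma -> {set Q'})
          (beta : {set Q'}),
      GFG Q0' delta' (buchi_acc beta) /\
      forall w, lang Q0' delta' (buchi_acc beta) w <-> lang Q0 delta (rabin_acc alpha) w) ->
  (* g = <Sigma, Q, M, m0, rho, tau> witnesses the GFGness of A *)
  GFG_strategy Q0 delta (rabin_acc alpha) (strat_of m0 rho tau) ->
  (* the transducer is trim: every memory is reachable from m0 *)
  (forall m, reachable m0 rho m) ->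
  (forall (q : Q) (m : M), tau m = q ->
     ~ (on_excl_acc_cycle rho tau alpha q m /\ on_rej_cycle rho tau alpha m)) /\
  (forall (q : Q) (m m' : M), tau m = q -> tau m' = q ->
     on_excl_acc_cycle rho tau alpha q m -> on_rej_cycle rho tau alpha m' ->
     empty_or_all_comb_acc rho tau alpha m m' \/
     empty_or_all_comb_acc rho tau alpha m' m).
Proof.
move=> [Q' [Q0' [delta' [beta [[g' gfg_g'] same_lang]]]]] gfg_g trim.
have acc_union := acc_loop_setU gfg_g' same_lang gfg_g.
split.
  move=> q m mq [[x1 [s1 [cyc1 exc]]] [x2 [s2 [cyc2 rej]]]].
  have [v [v_neq0 v_loop visE]] := cycle_through_loop cyc1.
  have [u [_ u_loop visE']] := cycle_through_loop cyc2.
  rewrite visE in exc; rewrite visE' in rej.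
  apply: (@rabin_acc0 _ (alpha_g tau alpha)).
  apply: (acc_excl_rej exc rej (mem_visited _ _ _) mq).
  by rewrite setU0; apply: acc_union _ _ _ v_neq0 v_loop exc.1 (trim m) u_loop.
move=> q m m' _ m'q [x1 [s1 [cyc1 exc]]] [x2 [s2 [cyc2 rej]]].
have [v [v_neq0 v_loop visE]] := cycle_through_loop cyc1.
have [c [_ c_loop visE']] := cycle_through_loop cyc2.
rewrite visE in exc; rewrite visE' in rej.
case: (classic (empty_or_all_comb_acc rho tau alpha m m')) => [|]; first by left.
case/not_empty_or_all_comb_acc => ps [ps_neq0 paths U_rej].
right; right => ps' ps'_neq0 paths'.
have [u u_loop visE''] := comb_cycle c_loop ps_neq0 ps'_neq0 paths paths'.
have := acc_union _ _ _ v_neq0 v_loop exc.1 (trim m) u_loop.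
rewrite visE'' (setUC (comb m ps)) -(setUA (visited rho m' c)) setUA.
by case/(acc_excl_rej exc rej (mem_visited _ _ _) m'q)/rabin_accU.
Qed.
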